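(* Let $d\ge2$ and consider the linear system $\mathcal{S}_d$ in the unknowns $\alpha_{d,1},\ldots,\alpha_{d,d}$ consisting of the equations \begin{itemize} \item $\alpha_{d,d}=d-2$; \item for every $1\le k\le\lfloor d/2\rfloor$: $(d-k-1)\alpha_{d,k}+(k-1)\alpha_{d,d-k}+\alpha_{d,d}=2\big(k(d-k)-d+1\big)$; \item for every $1\le k\le\lfloor (d-1)/2\rfloor$: $(d-k-1)\alpha_{d,k}+2(d-k-2)\alpha_{d,k+1}+k\,\alpha_{d,d-k-1}+2(k-1)\alpha_{d,d-k}+2\alpha_{d,d}=2\big(3k(d-k-1)-2d+3\big)$. \end{itemize} Then, provided that $\alpha_{d,d-1}:=d-3$, the system $\mathcal{S}_d$ admits the unique solution $(\alpha_{d,1},\ldots,\alpha_{d,d})=(-1,0,1,\ldots,d-2)$, i.e. $\alpha_{d,j}=j-2$ for all $1\le j\le d$. *)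

From mathcomp Require Import all_boot all_order all_algebra.
Set Implicit Arguments. Unset Strict Implicit. Unset Printing Implicit Defensive.
Import Order.TTheory GRing.Theory Num.Theory.
Local Open Scope ring_scope.

(* The linear system S_d in the unknowns a 1, ..., a d (a : nat -> R;
   values of a outside 1..d are irrelevant).  Coefficients are computed
   in R to avoid truncated nat subtraction. *)
Definition system_S (R : numFieldType) (d : nat) (a : nat -> R) : Prop :=
  a d = d%:R - 2 /\
  (forall k : nat, (1 <= k <= d %/ 2)%N ->
     (d%:R - k%:R - 1) * a k + (k%:R - 1) * a (d - k)%N + a d
       = 2 * (k%:R * (d%:R - k%:R) - d%:R + 1)) /\
  (forall k : nat, (1 <= k <= (d - 1) %/ 2)%N ->
     (d%:R - k%:R - 1) * a k + 2 * (d%:R - k%:R - 2) * a k.+1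
     + k%:R * a (d - k - 1)%N + 2 * (k%:R - 1) * a (d - k)%N + 2 * a d
       = 2 * (3 * k%:R * (d%:R - k%:R - 1) - 2 * d%:R + 3)).

(* The system is affine, so the difference b of two solutions satisfies it
   with zero right-hand sides.  Knowing b at d and d - 1, the first equation
   with k = 1 kills b 1; then, if b vanishes at k and d - k, the first
   equation at k + 1 and the second at k form a triangular 2x2 system in
   b (k + 1) and b (d - k - 1) with nonzero diagonal d - k - 2 and k, so b
   vanishes there too.  Pairing k with d - k covers all of 1..d. *)

From mathcomp Require Import all_boot all_order all_algebra.
From mathcomp Require Import zify ring.
Set Implicit Arguments.
Unset Strict Implicit.
Unset Printing Implicit Defensive.
Import Order.TTheory GRing.Theory Num.Theory.
Local Open Scope ring_scope.

Lemma natr_mul_eq0 (R : numDomainType) (n : nat) (x : R) :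
  (0 < n)%N -> n%:R * x = 0 -> x = 0.
Proof. by move=> n_gt0 /eqP; rewrite mulf_eq0 pnatr_eq0 gtn_eqF //= => /eqP. Qed.

Lemma natrB_mul_eq0 (R : numDomainType) (m n : nat) (x : R) :
  (n < m)%N -> (m%:R - n%:R) * x = 0 -> x = 0.
Proof.
by move=> lt_nm; rewrite -natrB ?(ltnW lt_nm) //; apply: natr_mul_eq0; rewrite subn_gt0.
Qed.

Lemma system_S_natr_sub2 (R : numFieldType) (d : nat) :
  system_S d (fun j : nat => j%:R - 2 : R).
Proof.
split=> //; split=> k /andP[k_gt0 k_le].
  by rewrite natrB; [ring | lia].
have -> : (d - k - 1 = d - k.+1)%N by lia.
by rewrite !natrB; [ring | lia..].
Qed.

Section Uniqueness.

Variables (R : numFieldType) (d : nat) (a a' : nat -> R).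
Hypotheses (Sa : system_S d a) (Sa' : system_S d a').
Hypothesis eq_a_pred : a (d - 1)%N = a' (d - 1)%N.

Let b j := a j - a' j.

Let b_pred : b (d - 1)%N = 0.
Proof. by rewrite /b eq_a_pred subrr. Qed.

Let b_d : b d = 0.
Proof. by rewrite /b; case: Sa => -> _; case: Sa' => -> _; rewrite subrr. Qed.

Let b_eq1 k : (1 <= k <= d %/ 2)%N ->
  (d%:R - k%:R - 1) * b k + (k%:R - 1) * b (d - k)%N + b d = 0.
Proof.
case: Sa Sa' => _ [E _] [_ [E' _]] hk.
have /eqP := E k hk; rewrite -(E' k hk) -subr_eq0 => /eqP.
by move=> <-; rewrite /b; ring.
Qed.

Let b_eq2 k : (1 <= k <= (d - 1) %/ 2)%N ->
  (d%:R - k%:R - 1) * b k + 2 * (d%:R - k%:R - 2) * b k.+1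
  + k%:R * b (d - k - 1)%N + 2 * (k%:R - 1) * b (d - k)%N + 2 * b d = 0.
Proof.
case: Sa Sa' => _ [_ E] [_ [_ E']] hk.
have /eqP := E k hk; rewrite -(E' k hk) -subr_eq0 => /eqP.
by move=> <-; rewrite /b; ring.
Qed.

Let b1 : (2 <= d)%N -> b 1 = 0.
Proof.
rewrite leq_eqVlt => /orP[/eqP d2 | d_gt2]; first by move: b_pred; rewrite -d2.
have := b_eq1 (ltac:(lia) : (1 <= 1 <= d %/ 2)%N).
rewrite b_pred b_d mulr0 !addr0 => e1.
by apply: (natrB_mul_eq0 d_gt2); rewrite -e1; ring.
Qed.

Let b_step k : (0 < k)%N -> (k.+1 <= d %/ 2)%N ->
  b k = 0 -> b (d - k)%N = 0 -> b k.+1 = 0 /\ b (d - k.+1)%N = 0.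
Proof.
move=> k_gt0 hk bk bdk.
have := b_eq1 (ltac:(lia) : (1 <= k.+1 <= d %/ 2)%N).
have := b_eq2 (ltac:(lia) : (1 <= k <= (d - 1) %/ 2)%N).
rewrite bk bdk b_d !mulr0 add0r !addr0 -subnDA addn1.
set x := b k.+1; set y := b (d - k.+1)%N => e2 e1.
have x0 : x = 0.
  apply: (@natrB_mul_eq0 _ d (k + 2)); first by lia.
  by rewrite -[RHS](subrr 0) -{1}e2 -e1 natrD; ring.
split=> //; apply: (natr_mul_eq0 k_gt0).
by rewrite -e1 x0; ring.
Qed.

Let b_pair k : (1 <= k <= d %/ 2)%N -> b k = 0 /\ b (d - k)%N = 0.
Proof.
elim: k => [//|[_ hk|k IH hk]]; first by rewrite b1 ?b_pred //; lia.
by have [] := IH (ltac:(lia) : (1 <= k.+1 <= d %/ 2)%N); last exact: b_step.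
Qed.

Lemma system_S_unique j : (1 <= j <= d)%N -> a j = a' j.
Proof.
move=> hj; apply/eqP; rewrite -subr_eq0; apply/eqP; rewrite -/(b j).
have [j_le | j_gt] := leqP j (d %/ 2).
  by case: (b_pair (ltac:(lia) : (1 <= j <= d %/ 2)%N)).
have [j_lt_d | j_ge_d] := ltnP j d; last by rewrite (_ : j = d) ?b_d //; lia.
have [_] := b_pair (ltac:(lia) : (1 <= d - j <= d %/ 2)%N).
by rewrite subKn // ltnW.
Qed.

End Uniqueness.

Theorem proposition4p15 (R : realFieldType) (d : nat) (hd : (2 <= d)%N) :
  system_S d (fun j : nat => j%:R - 2 : R) /\
  (forall a : nat -> R, a (d - 1)%N = d%:R - 3 -> system_S d a ->
     forall j : nat, (1 <= j <= d)%N -> a j = j%:R - 2).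
Proof.
split=> [|a a_pred Sa j hj]; first exact: system_S_natr_sub2.
apply: (system_S_unique Sa (system_S_natr_sub2 R d)) => //.
by rewrite a_pred natrB; [ring | lia].
Qed.
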